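(* Let $d\ge 1$ and $h\ge 1$ be integers, let $T$ be the complete $d$-ary tree of height $h$, and let $u,v$ be vertices of $T$ with least common ancestor $c$. Let $u'$, $v'$, $c'$ be the distances of $u$, $v$, $c$ respectively from the root. Then the hitting time from $u$ to $v$ is \[f_{h-c'}(d)-f_{h-u'}(d)+g_{h,v'}(d)-g_{h,c'}(d).\]
   Context: The complete $d$-ary tree of height $h$ is the rooted tree in which every vertex at depth less than $h$ has exactly $d$ children and every vertex at depth $h$ is a leaf. For nonnegative integers $n$, $f_0(d)=0$ and for $n\ge1$, $f_n(d)=\left(\sum_{i=0}^{n-1}(2n-2i)d^i\right)-n$. For a positive integer $k$ and nonnegative integer $m$, $g_{k,0}(d)=0$ and for $m\ge1$, $g_{k,m}(d)=\left(\sum_{i=0}^{m-1}(2m-2i)d^{k-i}\right)-m$. A simple random walk moves at each step to a uniformly random neighbor; the hitting time from $x$ to $y$ is the expected number of steps for a simple random walk started at $x$ to first reach $y$. *)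

From Stdlib Require Import Reals List Arith.
From Coquelicot Require Import Coquelicot.
Import ListNotations.
Open Scope R_scope.

(* Vertices of the complete d-ary tree of height h are encoded as the words
   (lists) of child indices read from the root: the root is [], and the
   children of x are x ++ [i] for i < d (only when length x < h). *)
Definition is_vertex (d h : nat) (x : list nat) : Prop :=
  (length x <= h)%nat /\ List.Forall (fun i => (i < d)%nat) x.

Definition children (d h : nat) (x : list nat) : list (list nat) :=
  if Nat.ltb (length x) h then map (fun i => x ++ [i]) (List.seq 0 d) else [].

Definition parent_list (x : list nat) : list (list nat) :=
  match x with [] => [] | _ :: _ => [removelast x] end.

Definition nbrs (d h : nat) (x : list nat) : list (list nat) :=
  parent_list x ++ children d h x.

Definition deg (d h : nat) (x : list nat) : nat := length (nbrs d h x).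

Definition vdec := list_eq_dec Nat.eq_dec.

(* hit_prob d h y t x = probability that the simple random walk started at x
   first reaches y at exactly step t (first-step decomposition of the
   walk: from x <> y, move to a uniformly random neighbour). *)
Fixpoint hit_prob (d h : nat) (y : list nat) (t : nat) (x : list nat) : R :=
  match t with
  | O => if vdec x y then 1 else 0
  | S t' => if vdec x y then 0
            else / INR (deg d h x) *
                 fold_right Rplus 0 (map (hit_prob d h y t') (nbrs d h x))
  end.

(* H is the hitting time from x to y: the expected value of the first hitting
   time, i.e. the (convergent) sum  sum_t t * P(tau_y = t). *)
Definition is_hitting_time (d h : nat) (x y : list nat) (H : R) : Prop :=
  is_series (fun t => INR t * hit_prob d h y t x) H.

Fixpoint lca (x y : list nat) : list nat :=
  match x, y with
  | a :: x', b :: y' => if Nat.eq_dec a b then a :: lca x' y' else []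
  | _, _ => []
  end.

Definition sumR (l : list R) : R := fold_right Rplus 0 l.

Definition f_poly (n : nat) (d : R) : R :=
  match n with
  | O => 0
  | S _ => sumR (map (fun i => (2 * INR n - 2 * INR i) * d ^ i) (List.seq 0 n)) - INR n
  end.

Definition g_poly (k m : nat) (d : R) : R :=
  match m with
  | O => 0
  | S _ => sumR (map (fun i => (2 * INR m - 2 * INR i) * d ^ (k - i)) (List.seq 0 m)) - INR m
  end.

From Stdlib Require Import Reals List Lia Lra.
From Coquelicot Require Import Coquelicot.
Import ListNotations.
Open Scope R_scope.

(* Fix v and let H(x) be the right-hand side with u replaced by x.  H vanishes at v,
   is bounded on the tree, and satisfies the first-step equation
   H(x) = 1 + (mean of H over the neighbours of x) for x <> v: every neighbour of x has
   the same least common ancestor with v as x, except the child of x on the path to v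
   and the parent of an ancestor of v, so only depths change and the equation reduces
   to identities for f and g, whose second differences are 2 d^(n+1) and 2 d^(h-m).

   On any graph such an H is the expected hitting time.  With U_t = P(tau > t),
   H(x) = U_0 + ... + U_T + E[H(X_(T+1)); tau > T], and the last term is at most
   (max H) U_T, which tends to 0 since U is non-increasing with bounded partial sums.
   Hence sum_t U_t = H(x), and sum_t t P(tau = t) = sum_t U_t because (n + 1) U_n -> 0
   for a non-increasing summable sequence. *)

Lemma mult_index_le_sum_n (U : nat -> R) :
  (forall n, U (S n) <= U n) -> forall n, INR (S n) * U n <= sum_n U n.
Proof.
  intros Udec n; induction n as [|n IH].
  - rewrite sum_O; simpl; lra.
  - rewrite sum_Sn, S_INR; change plus with Rplus.
    pose proof (Udec n); pose proof (pos_INR (S n)).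
    assert (INR (S n) * U (S n) <= INR (S n) * U n) by (apply Rmult_le_compat_l; lra).
    lra.
Qed.

Lemma mult_index_le_sum_n_tail (U : nat -> R) :
  (forall n, U (S n) <= U n) ->
  forall m k, INR k * U (m + k)%nat <= sum_n U (m + k) - sum_n U m.
Proof.
  intros Udec m k; induction k as [|k IH].
  - rewrite Nat.add_0_r; simpl; lra.
  - rewrite Nat.add_succ_r, sum_Sn, S_INR; change plus with Rplus.
    pose proof (Udec (m + k)%nat); pose proof (pos_INR k).
    assert (INR k * U (S (m + k)) <= INR k * U (m + k)%nat) by (apply Rmult_le_compat_l; lra).
    lra.
Qed.

Lemma is_lim_seq_decr_bounded_sum (U : nat -> R) (B : R) :
  (forall n, 0 <= U n) -> (forall n, U (S n) <= U n) -> (forall n, sum_n U n <= B) ->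
  is_lim_seq U 0.
Proof.
  intros U0 Udec UB.
  assert (Hinv : is_lim_seq (fun n => B * / INR (S n)) 0).
  { replace (Finite 0) with (Rbar_mult B (Rbar_inv p_infty)) by (simpl; f_equal; ring).
    apply is_lim_seq_scal_l, is_lim_seq_inv; [|discriminate].
    apply (is_lim_seq_incr_1 INR), is_lim_seq_INR. }
  apply (is_lim_seq_le_le (fun _ => 0) U (fun n => B * / INR (S n)) 0);
    [|apply is_lim_seq_const|exact Hinv].
  intros n; split; [apply U0|].
  pose proof (lt_0_INR (S n) ltac:(lia)).
  apply (Rmult_le_reg_l (INR (S n))); [lra|].
  replace (INR (S n) * (B * / INR (S n))) with B by (field; lra).
  pose proof (mult_index_le_sum_n U Udec n); pose proof (UB n); lra.
Qed.

Lemma is_lim_seq_mult_index (U : nat -> R) (L : R) :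
  (forall n, 0 <= U n) -> (forall n, U (S n) <= U n) -> is_series U L ->
  is_lim_seq (fun n => INR (S n) * U n) 0.
Proof.
  intros U0 Udec HU.
  assert (Ulim := ex_series_lim_0 U (ex_intro _ L HU)).
  assert (HS : is_lim_seq (sum_n U) L) by exact HU.
  apply is_lim_seq_spec in HS, Ulim; apply is_lim_seq_spec; intros eps.
  destruct (HS (pos_div_2 (pos_div_2 eps))) as [N HN]; simpl in HN.
  assert (HNpos : 0 < INR (S N)) by (apply lt_0_INR; lia).
  destruct (Ulim (mkposreal (eps / 2 / INR (S N))
                   ltac:(apply Rdiv_lt_0_compat; [apply (pos_div_2 eps)|exact HNpos])))
    as [N' HN']; cbn [pos] in HN'.
  exists (N + N')%nat; intros n Hn.
  destruct (Nat.le_exists_sub N n ltac:(lia)) as [k [-> _]]; rewrite Nat.add_comm.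
  assert (Htail := mult_index_le_sum_n_tail U Udec N k).
  assert (Hcauchy : sum_n U (N + k) - sum_n U N < eps / 2).
  { pose proof (Rabs_def2 _ _ (HN (N + k)%nat ltac:(lia))).
    pose proof (Rabs_def2 _ _ (HN N (le_n N))); lra. }
  assert (Hsmall : INR (S N) * U (N + k)%nat < eps / 2).
  { pose proof (HN' (N + k)%nat ltac:(lia)) as Hk.
    rewrite Rminus_0_r, Rabs_pos_eq in Hk by apply U0.
    apply (Rmult_lt_compat_l (INR (S N))) in Hk; [|exact HNpos].
    replace (INR (S N) * (eps / 2 / INR (S N))) with (eps / 2) in Hk by (field; lra).
    exact Hk. }
  rewrite Rminus_0_r, Rabs_pos_eq.
  - replace (INR (S (N + k))) with (INR k + INR (S N)) by (rewrite <- plus_INR; apply f_equal; lia).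
    lra.
  - apply Rmult_le_pos; [apply pos_INR|apply U0].
Qed.

Lemma sum_n_mult_index (p U : nat -> R) :
  (forall n, p (S n) = U n - U (S n)) ->
  forall n, sum_n (fun t => INR t * p t) n = sum_n U n - INR (S n) * U n :> R.
Proof.
  intros Hp n; induction n as [|n IH].
  - rewrite !sum_O; simpl; ring.
  - rewrite !sum_Sn, IH, Hp; change plus with Rplus; rewrite !S_INR; ring.
Qed.

Lemma is_series_mult_index (p U : nat -> R) (L : R) :
  (forall n, 0 <= U n) -> (forall n, U (S n) <= U n) ->
  (forall n, p (S n) = U n - U (S n)) -> is_series U L ->
  is_series (fun t => INR t * p t) L.
Proof.
  intros U0 Udec Hp HU.
  assert (HS : is_lim_seq (sum_n U) L) by exact HU.
  assert (Hlim := is_lim_seq_minus' _ _ _ _ HS (is_lim_seq_mult_index U L U0 Udec HU)).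
  rewrite Rminus_0_r in Hlim.
  apply (is_lim_seq_ext _ _ _ (fun n => eq_sym (sum_n_mult_index p U Hp n))) in Hlim.
  exact Hlim.
Qed.

Lemma sumR_cons (a : R) (l : list R) : sumR (a :: l) = a + sumR l.
Proof. reflexivity. Qed.

Lemma sumR_app (l1 l2 : list R) : sumR (l1 ++ l2) = sumR l1 + sumR l2.
Proof. induction l1 as [|a l IH]; simpl; [lra|]. unfold sumR in *; simpl; rewrite IH; lra. Qed.

Lemma sumR_map_plus {A : Type} (f g : A -> R) (l : list A) :
  sumR (map (fun x => f x + g x) l) = sumR (map f l) + sumR (map g l).
Proof. induction l as [|a l IH]; unfold sumR in *; simpl; [lra|]. rewrite IH; lra. Qed.

Lemma sumR_map_minus {A : Type} (f g : A -> R) (l : list A) :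
  sumR (map (fun x => f x - g x) l) = sumR (map f l) - sumR (map g l).
Proof. induction l as [|a l IH]; unfold sumR in *; simpl; [lra|]. rewrite IH; lra. Qed.

Lemma sumR_map_scal {A : Type} (c : R) (f : A -> R) (l : list A) :
  sumR (map (fun x => c * f x) l) = c * sumR (map f l).
Proof. induction l as [|a l IH]; unfold sumR in *; simpl; [lra|]. rewrite IH; lra. Qed.

Lemma sumR_map_const {A : Type} (c : R) (l : list A) :
  sumR (map (fun _ => c) l) = INR (length l) * c.
Proof.
  induction l as [|a l IH]; unfold sumR in *; simpl length; [simpl; lra|].
  rewrite S_INR; simpl; rewrite IH; lra.
Qed.

Lemma sumR_map_le {A : Type} (f g : A -> R) (l : list A) :
  (forall x, In x l -> f x <= g x) -> sumR (map f l) <= sumR (map g l).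
Proof.
  induction l as [|a l IH]; unfold sumR in *; simpl; intros Hfg; [lra|].
  pose proof (Hfg a (or_introl eq_refl)); pose proof (IH (fun x Hx => Hfg x (or_intror Hx))).
  lra.
Qed.

Section RandomWalk.

Variable X : Type.
Variable eq_dec : forall x y : X, {x = y} + {x <> y}.
Variable nb : X -> list X.
Variable V : X -> Prop.
Hypothesis nb_closed : forall x z, V x -> In z (nb x) -> V z.
Hypothesis nb_nonnil : forall x, V x -> nb x <> [].

Definition avg (f : X -> R) (x : X) : R := / INR (length (nb x)) * sumR (map f (nb x)).

Lemma nb_length_pos (x : X) : V x -> 0 < INR (length (nb x)).
Proof.
  intros Vx; apply lt_0_INR.
  destruct (nb x) eqn:E; [now destruct (nb_nonnil x Vx)|simpl; lia].
Qed.

Lemma avg_ext (f g : X -> R) (x : X) :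
  (forall z, In z (nb x) -> f z = g z) -> avg f x = avg g x.
Proof. intros Hfg; unfold avg; f_equal; f_equal; apply map_ext_in, Hfg. Qed.

Lemma avg_plus (f g : X -> R) (x : X) : avg (fun z => f z + g z) x = avg f x + avg g x.
Proof. unfold avg; rewrite sumR_map_plus; ring. Qed.

Lemma avg_minus (f g : X -> R) (x : X) : avg (fun z => f z - g z) x = avg f x - avg g x.
Proof. unfold avg; rewrite sumR_map_minus; ring. Qed.

Lemma avg_scal (c : R) (f : X -> R) (x : X) : avg (fun z => c * f z) x = c * avg f x.
Proof. unfold avg; rewrite sumR_map_scal; ring. Qed.

Lemma avg_const (c : R) (x : X) : V x -> avg (fun _ => c) x = c.
Proof.
  intros Vx; unfold avg; rewrite sumR_map_const.
  pose proof (nb_length_pos x Vx); field; lra.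
Qed.

Lemma avg_eq (f : X -> R) (c : R) (x : X) :
  V x -> sumR (map f (nb x)) = INR (length (nb x)) * c -> avg f x = c.
Proof. intros Vx E; unfold avg; rewrite E; pose proof (nb_length_pos x Vx); field; lra. Qed.

Lemma avg_le (f g : X -> R) (x : X) :
  V x -> (forall z, In z (nb x) -> f z <= g z) -> avg f x <= avg g x.
Proof.
  intros Vx Hfg; unfold avg; apply Rmult_le_compat_l.
  - now apply Rlt_le, Rinv_0_lt_compat, nb_length_pos.
  - now apply sumR_map_le.
Qed.

Lemma avg_bounds (f : X -> R) (a b : R) (x : X) :
  V x -> (forall z, V z -> a <= f z <= b) -> a <= avg f x <= b.
Proof.
  intros Vx Hf; rewrite <- (avg_const a x Vx) at 1; rewrite <- (avg_const b x Vx).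
  split; apply avg_le; auto; intros z Hz; apply (Hf z (nb_closed x z Vx Hz)).
Qed.

Fixpoint first_passage (y : X) (t : nat) (x : X) : R :=
  match t with
  | O => if eq_dec x y then 1 else 0
  | S t' => if eq_dec x y then 0 else avg (first_passage y t') x
  end.

(* P_x(tau_y > t), where tau_y is the hitting time of y *)
Fixpoint survival (y : X) (t : nat) (x : X) : R :=
  match t with
  | O => if eq_dec x y then 0 else 1
  | S t' => if eq_dec x y then 0 else avg (survival y t') x
  end.

(* E_x[H(X_t); tau_y >= t]: the walk is killed when it reaches y. *)
Fixpoint stopped_value (H : X -> R) (y : X) (t : nat) (x : X) : R :=
  match t with
  | O => H x
  | S t' => if eq_dec x y then 0 else avg (stopped_value H y t') x
  end.

Lemma survival_bounds (y : X) (t : nat) (x : X) : V x -> 0 <= survival y t x <= 1.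
Proof.
  revert x; induction t as [|t IH]; intros x Vx; simpl; destruct (eq_dec x y); try lra.
  now apply avg_bounds.
Qed.

Lemma first_passage_bounds (y : X) (t : nat) (x : X) : V x -> 0 <= first_passage y t x <= 1.
Proof.
  revert x; induction t as [|t IH]; intros x Vx; simpl; destruct (eq_dec x y); try lra.
  now apply avg_bounds.
Qed.

Lemma first_passage_succ (y : X) (t : nat) (x : X) :
  V x -> first_passage y (S t) x = survival y t x - survival y (S t) x.
Proof.
  revert x; induction t as [|t IH]; intros x Vx; cbn [first_passage survival];
    destruct (eq_dec x y); try lra.
  - rewrite (avg_ext _ (fun z => 1 - survival y 0 z)), avg_minus, (avg_const 1 x Vx).
    + reflexivity.
    + intros z _; cbn; destruct (eq_dec z y); lra.
  - rewrite <- avg_minus; apply avg_ext; intros z Hz; apply IH, (nb_closed x z Vx Hz).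
Qed.

Lemma survival_succ_le (y : X) (t : nat) (x : X) :
  V x -> survival y (S t) x <= survival y t x.
Proof.
  intros Vx; pose proof (first_passage_bounds y (S t) x Vx) as Hp.
  rewrite first_passage_succ in Hp by exact Vx; lra.
Qed.

Section Harmonic.

Variables (y : X) (H : X -> R) (M : R).
Hypothesis H_target : H y = 0.
Hypothesis H_harmonic : forall x, V x -> x <> y -> H x = 1 + avg H x.
Hypothesis H_bounds : forall x, V x -> 0 <= H x <= M.

Lemma stopped_value_succ (t : nat) (x : X) :
  V x -> stopped_value H y t x = survival y t x + stopped_value H y (S t) x.
Proof.
  revert x; induction t as [|t IH]; intros x Vx; cbn [stopped_value survival];
    destruct (eq_dec x y) as [->|Hxy]; try lra.
  - now apply H_harmonic.
  - rewrite <- avg_plus; apply avg_ext; intros z Hz; apply IH, (nb_closed x z Vx Hz).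
Qed.

Lemma stopped_value_bounds (t : nat) (x : X) :
  V x -> 0 <= stopped_value H y (S t) x <= M * survival y t x.
Proof.
  revert x; induction t as [|t IH]; intros x Vx; cbn [stopped_value survival];
    destruct (eq_dec x y); try lra.
  - rewrite Rmult_1_r; now apply avg_bounds.
  - rewrite <- avg_scal; split.
    + apply Rle_trans with (avg (fun _ => 0) x); [rewrite (avg_const 0 x Vx); lra|].
      apply avg_le; auto; intros z Hz; apply (IH z (nb_closed x z Vx Hz)).
    + apply avg_le; auto; intros z Hz; apply (IH z (nb_closed x z Vx Hz)).
Qed.

Lemma sum_survival (T : nat) (x : X) :
  V x -> H x = sum_n (fun t => survival y t x) T + stopped_value H y (S T) x.
Proof.
  intros Vx; induction T as [|T IH].
  - rewrite sum_O; exact (stopped_value_succ 0 x Vx).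
  - rewrite sum_Sn, IH, (stopped_value_succ (S T) x Vx); change plus with Rplus; ring.
Qed.

Theorem is_series_first_passage (u : X) :
  V u -> is_series (fun t => INR t * first_passage y t u) (H u).
Proof.
  intros Vu; set (U t := survival y t u).
  assert (U0 : forall t, 0 <= U t) by (intros t; apply survival_bounds, Vu).
  assert (Udec : forall t, U (S t) <= U t) by (intros t; apply survival_succ_le, Vu).
  apply (is_series_mult_index _ U); auto.
  - intros t; apply first_passage_succ, Vu.
  - assert (Ulim : is_lim_seq U 0).
    { apply (is_lim_seq_decr_bounded_sum U (H u) U0 Udec); intros T.
      rewrite (sum_survival T u Vu); pose proof (stopped_value_bounds T u Vu); unfold U; lra. }
    assert (Klim : is_lim_seq (fun T => stopped_value H y (S T) u) 0).
    { apply (is_lim_seq_le_le (fun _ => 0) _ (fun T => M * U T)).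
      - intros T; apply stopped_value_bounds, Vu.
      - apply is_lim_seq_const.
      - replace (Finite 0) with (Rbar_mult M 0) by (simpl; f_equal; ring).
        now apply is_lim_seq_scal_l. }
    change (is_lim_seq (sum_n U) (H u)).
    apply (is_lim_seq_ext (fun T => H u - stopped_value H y (S T) u)).
    + intros T; rewrite (sum_survival T u Vu); unfold U; ring.
    + replace (Finite (H u)) with (Finite (H u - 0)) by (f_equal; ring).
      apply is_lim_seq_minus'; [apply is_lim_seq_const|exact Klim].
Qed.

End Harmonic.

End RandomWalk.

Arguments avg {X}.
Arguments first_passage {X}.

Definition fg_sum (c : nat -> R) (n : nat) : R :=
  sumR (map (fun i => (2 * INR n - 2 * INR i) * c i) (seq 0 n)) - INR n.

Lemma f_poly_fg_sum (n : nat) (d : R) : f_poly n d = fg_sum (pow d) n.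
Proof. destruct n; [unfold fg_sum; simpl; ring|reflexivity]. Qed.

Lemma g_poly_fg_sum (k m : nat) (d : R) : g_poly k m d = fg_sum (fun i => d ^ (k - i)) m.
Proof. destruct m; [unfold fg_sum; simpl; ring|reflexivity]. Qed.

Lemma fg_sum_succ (c : nat -> R) (n : nat) :
  fg_sum c (S n) = fg_sum c n + 2 * sumR (map c (seq 0 (S n))) - 1.
Proof.
  unfold fg_sum; rewrite !seq_S, !map_app, !sumR_app.
  rewrite (map_ext_in _ (fun i => (2 * INR n - 2 * INR i) * c i + 2 * c i)).
  - rewrite sumR_map_plus, sumR_map_scal, S_INR; unfold sumR; simpl; ring.
  - intros i _; rewrite S_INR; ring.
Qed.

Lemma fg_sum_diff2 (c : nat -> R) (n : nat) :
  fg_sum c (S (S n)) - 2 * fg_sum c (S n) + fg_sum c n = 2 * c (S n).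
Proof.
  rewrite !fg_sum_succ, (seq_S (S n)), map_app, sumR_app; unfold sumR at 3; simpl; ring.
Qed.

Lemma fg_sum_mono (c : nat -> R) (m n : nat) :
  (forall i, 1 <= c i) -> (m <= n)%nat -> fg_sum c m <= fg_sum c n.
Proof.
  intros Hc Hmn; induction Hmn as [|n _ IH]; [lra|].
  rewrite fg_sum_succ, seq_S, map_app, sumR_app.
  assert (0 <= sumR (map c (seq 0 n))).
  { rewrite <- (Rmult_0_r (INR (length (seq 0 n)))), <- sumR_map_const.
    apply sumR_map_le; intros i _; specialize (Hc i); lra. }
  unfold sumR at 2; simpl; specialize (Hc n); lra.
Qed.

Lemma fg_sum_nonneg (c : nat -> R) (n : nat) : (forall i, 1 <= c i) -> 0 <= fg_sum c n.
Proof.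
  intros Hc; replace 0 with (fg_sum c 0) by (unfold fg_sum; simpl; ring).
  apply fg_sum_mono; [exact Hc|lia].
Qed.

Lemma f_poly_1 (d : R) : f_poly 1 d = 1.
Proof. unfold f_poly, sumR; simpl; ring. Qed.

Lemma g_poly_1 (k : nat) (d : R) : g_poly k 1 d = 2 * d ^ k - 1.
Proof. unfold g_poly, sumR; simpl; rewrite Nat.sub_0_r; ring. Qed.

Lemma f_poly_diff2 (n : nat) (d : R) :
  f_poly (S (S n)) d - 2 * f_poly (S n) d + f_poly n d = 2 * d ^ S n.
Proof. rewrite !f_poly_fg_sum; apply fg_sum_diff2. Qed.

Lemma g_poly_diff2 (k m : nat) (d : R) :
  g_poly k (S (S m)) d - 2 * g_poly k (S m) d + g_poly k m d = 2 * d ^ (k - S m).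
Proof. rewrite !g_poly_fg_sum; apply fg_sum_diff2. Qed.

Lemma f_poly_diff_scaled (n : nat) (d : R) :
  (d - 1) * (f_poly (S n) d - f_poly n d) = 2 * d ^ S n - d - 1.
Proof.
  induction n as [|n IH].
  - rewrite f_poly_1; simpl; ring.
  - pose proof (f_poly_diff2 n d); simpl pow in *; nra.
Qed.

Lemma f_poly_recurrence (n : nat) (d : R) :
  f_poly (S (S n)) d + d * f_poly n d = (d + 1) * f_poly (S n) d + (d + 1).
Proof. pose proof (f_poly_diff2 n d); pose proof (f_poly_diff_scaled n d); simpl pow in *; nra. Qed.

Lemma lca_length_l (x v : list nat) : (length (lca x v) <= length x)%nat.
Proof.
  revert v; induction x as [|a x IH]; intros [|b v]; simpl; try lia.
  destruct (Nat.eq_dec a b); simpl; [specialize (IH v)|]; lia.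
Qed.

Lemma lca_length_r (x v : list nat) : (length (lca x v) <= length v)%nat.
Proof.
  revert v; induction x as [|a x IH]; intros [|b v]; simpl; try lia.
  destruct (Nat.eq_dec a b); simpl; [specialize (IH v)|]; lia.
Qed.

Lemma lca_refl (v : list nat) : lca v v = v.
Proof. induction v as [|a v IH]; simpl; [|destruct (Nat.eq_dec a a)]; congruence. Qed.

Lemma lca_proper_ancestor (x v : list nat) :
  lca x v = x -> x <> v -> (length x < length v)%nat.
Proof.
  revert v; induction x as [|a x IH]; intros [|b v]; simpl; try congruence; try lia.
  destruct (Nat.eq_dec a b) as [<-|]; [|congruence].
  intros E N; injection E as E.
  assert (Hlt : (length x < length v)%nat) by (apply IH; congruence); lia.
Qed.

Lemma lca_snoc_cases (x v : list nat) (i : nat) :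
  lca (x ++ [i]) v = x ++ [i] \/ lca (x ++ [i]) v = lca x v.
Proof.
  revert v; induction x as [|a x IH]; intros [|b v]; simpl; auto.
  - destruct (Nat.eq_dec i b); destruct v; auto.
  - destruct (Nat.eq_dec a b); auto; destruct (IH v) as [-> | ->]; auto.
Qed.

Lemma lca_snoc_self (x v : list nat) (i : nat) :
  lca (x ++ [i]) v = x ++ [i] -> lca x v = x.
Proof.
  revert v; induction x as [|a x IH]; intros [|b v]; simpl; try easy.
  destruct (Nat.eq_dec a b); [|easy]; intros E; injection E as E; now rewrite IH.
Qed.

Lemma lca_snoc_ancestor (x v : list nat) (b i : nat) :
  lca x v = x -> nth_error v (length x) = Some b ->
  lca (x ++ [i]) v = if Nat.eq_dec i b then x ++ [i] else x.
Proof.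
  revert v; induction x as [|a x IH]; intros [|c v]; simpl; try easy.
  - intros _ E; injection E as ->; destruct (Nat.eq_dec i b); destruct v; reflexivity.
  - destruct (Nat.eq_dec a c) as [<-|]; [|easy]; intros E N; injection E as E.
    rewrite (IH v E N); destruct (Nat.eq_dec i b); reflexivity.
Qed.

Lemma sumR_map_seq_eq_dec (d b : nat) (A B : R) : (b < d)%nat ->
  sumR (map (fun i => if Nat.eq_dec i b then A else B) (seq 0 d)) = A + (INR d - 1) * B.
Proof.
  induction d as [|d IH]; intros Hb; [lia|].
  rewrite seq_S, map_app, sumR_app, S_INR; cbn [Nat.add map]; unfold sumR at 2; simpl.
  destruct (Nat.eq_dec d b) as [<-|Hdb].
  - rewrite (map_ext_in _ (fun _ => B)), sumR_map_const, length_seq; [ring|].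
    intros i Hi; apply in_seq in Hi; destruct (Nat.eq_dec i d); [lia|reflexivity].
  - rewrite IH by lia; ring.
Qed.

Lemma nbrs_snoc (d h : nat) (p : list nat) (a : nat) :
  nbrs d h (p ++ [a]) = p :: children d h (p ++ [a]).
Proof.
  unfold nbrs, parent_list; destruct (p ++ [a]) eqn:E; [now destruct p|].
  now rewrite <- E, removelast_last.
Qed.

Lemma is_vertex_nbrs (d h : nat) (x z : list nat) :
  is_vertex d h x -> In z (nbrs d h x) -> is_vertex d h z.
Proof.
  intros [Lx Fx] Hz; destruct x as [|a p] using rev_ind.
  - unfold nbrs, children in Hz; simpl in Hz.
    destruct (Nat.ltb_spec 0 h); [|easy].
    apply in_map_iff in Hz as [i [<- Hi]]; apply in_seq in Hi.
    split; simpl; [lia|repeat constructor; lia].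
  - clear IHp; rewrite nbrs_snoc in Hz; rewrite length_app in Lx; simpl in Lx.
    apply Forall_app in Fx as [Fp Fa]; destruct Hz as [<-|Hz]; [split; [lia|exact Fp]|].
    unfold children in Hz; destruct (Nat.ltb_spec (length (p ++ [a])) h); [|easy].
    apply in_map_iff in Hz as [i [<- Hi]]; apply in_seq in Hi.
    split; [rewrite !length_app in *; simpl in *; lia|].
    apply Forall_app; split; [apply Forall_app; auto|repeat constructor; lia].
Qed.

Lemma nbrs_nonnil (d h : nat) (x : list nat) :
  (1 <= d)%nat -> (1 <= h)%nat -> nbrs d h x <> [].
Proof.
  intros Hd Hh; destruct x as [|a p] using rev_ind; [|now rewrite nbrs_snoc].
  unfold nbrs, children; simpl; destruct (Nat.ltb_spec 0 h); [|lia].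
  destruct d; [lia|easy].
Qed.

Lemma hit_prob_first_passage (d h : nat) (y : list nat) (t : nat) (x : list nat) :
  hit_prob d h y t x = first_passage vdec (nbrs d h) y t x.
Proof.
  revert x; induction t as [|t IH]; intros x; simpl; [reflexivity|].
  destruct (vdec x y); [reflexivity|]; unfold avg, deg, sumR; do 2 f_equal.
  now apply map_ext.
Qed.

Definition tree_hit (d h : nat) (v x : list nat) : R :=
  f_poly (h - length (lca x v)) (INR d) - f_poly (h - length x) (INR d)
  + g_poly h (length v) (INR d) - g_poly h (length (lca x v)) (INR d).

Lemma tree_hit_off_path (d h : nat) (v p : list nat) (a : nat) :
  (length p < h)%nat -> lca (p ++ [a]) v <> p ++ [a] ->
  INR (deg d h (p ++ [a])) * (tree_hit d h v (p ++ [a]) - 1)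
  = sumR (map (tree_hit d h v) (nbrs d h (p ++ [a]))).
Proof.
  intros Lp Hoff; unfold deg; rewrite nbrs_snoc; remember (p ++ [a]) as x eqn:Ex.
  assert (Lx : length x = S (length p)) by (subst x; rewrite length_app; simpl; lia).
  assert (Cp : lca p v = lca x v) by (subst x; now destruct (lca_snoc_cases p v a)).
  assert (Cc : forall i, lca (x ++ [i]) v = lca x v).
  { intros i; destruct (lca_snoc_cases x v i) as [E|E]; [|exact E].
    now apply lca_snoc_self in E. }
  unfold children; cbn [map length]; rewrite sumR_cons, S_INR.
  destruct (Nat.ltb_spec (length x) h).
  - rewrite map_map, length_map, length_seq.
    rewrite (map_ext _ (fun _ => tree_hit d h v (x ++ [0%nat]))), sumR_map_const, length_seq.
    2:{ intros i; unfold tree_hit; rewrite !Cc, !length_app; reflexivity. }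
    unfold tree_hit; rewrite Cp, Cc, !length_app, Lx; simpl length.
    replace (h - length p)%nat with (S (S (h - S (S (length p))))) by lia.
    replace (h - (S (length p) + 1))%nat with (h - S (S (length p)))%nat by lia.
    replace (h - S (length p))%nat with (S (h - S (S (length p)))) by lia.
    pose proof (f_poly_recurrence (h - S (S (length p))) (INR d)); lra.
  - cbn [map length]; unfold sumR; simpl.
    unfold tree_hit; rewrite Cp, Lx.
    replace (h - length p)%nat with 1%nat by lia; replace (h - S (length p))%nat with 0%nat by lia.
    rewrite f_poly_1; simpl; lra.
Qed.

Lemma tree_hit_ancestor (d h : nat) (v x : list nat) :
  lca x v = x -> tree_hit d h v x = g_poly h (length v) (INR d) - g_poly h (length x) (INR d).
Proof. intros Hx; unfold tree_hit; rewrite Hx; ring. Qed.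

Lemma tree_hit_children_on_path (d h : nat) (v x : list nat) (b : nat) :
  (b < d)%nat -> lca x v = x -> nth_error v (length x) = Some b ->
  sumR (map (tree_hit d h v) (map (fun i => x ++ [i]) (seq 0 d)))
  = g_poly h (length v) (INR d) - g_poly h (S (length x)) (INR d)
    + (INR d - 1) * (f_poly (h - length x) (INR d) - f_poly (h - S (length x)) (INR d)
                     + g_poly h (length v) (INR d) - g_poly h (length x) (INR d)).
Proof.
  intros Hb Hx Hv; rewrite map_map, <- (sumR_map_seq_eq_dec d b _ _ Hb).
  f_equal; apply map_ext; intros i.
  unfold tree_hit; rewrite (lca_snoc_ancestor x v b i Hx Hv).
  destruct (Nat.eq_dec i b); rewrite ?length_app; simpl length; rewrite Nat.add_1_r; ring.
Qed.

Lemma tree_hit_on_path (d h : nat) (v x : list nat) :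
  is_vertex d h v -> lca x v = x -> x <> v ->
  INR (deg d h x) * (tree_hit d h v x - 1) = sumR (map (tree_hit d h v) (nbrs d h x)).
Proof.
  intros [Lv Fv] Hx Hxv.
  assert (Lxv := lca_proper_ancestor x v Hx Hxv).
  destruct (nth_error v (length x)) as [b|] eqn:Hv;
    [|apply nth_error_None in Hv; lia].
  assert (Hb : (b < d)%nat) by (rewrite Forall_forall in Fv; apply Fv, (nth_error_In _ _ Hv)).
  assert (Hchildren : children d h x = map (fun i => x ++ [i]) (seq 0 d)).
  { unfold children; destruct (Nat.ltb_spec (length x) h); [reflexivity|lia]. }
  assert (Hdiff := f_poly_diff_scaled (h - S (length x)) (INR d)).
  replace (S (h - S (length x))) with (h - length x)%nat in Hdiff by lia.
  rewrite tree_hit_ancestor by exact Hx.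
  destruct x as [|a p] using rev_ind.
  - unfold deg, nbrs; simpl parent_list; rewrite app_nil_l, Hchildren, length_map, length_seq.
    rewrite (tree_hit_children_on_path d h v [] b Hb Hx Hv), g_poly_1; simpl length in *.
    replace (h - 0)%nat with h in * by lia; change (g_poly h 0 (INR d)) with 0; lra.
  - unfold deg; rewrite nbrs_snoc, Hchildren; cbn [map length].
    rewrite sumR_cons, length_map, length_seq, S_INR.
    rewrite (tree_hit_children_on_path d h v _ b Hb Hx Hv).
    rewrite (tree_hit_ancestor d h v p (lca_snoc_self p v a Hx)).
    rewrite length_app in *; simpl length in *; rewrite Nat.add_1_r in *.
    pose proof (g_poly_diff2 h (length p) (INR d)); lra.
Qed.

Lemma tree_hit_target (d h : nat) (v : list nat) : tree_hit d h v v = 0.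
Proof. unfold tree_hit; rewrite lca_refl; ring. Qed.

Lemma tree_hit_bounds (d h : nat) (v x : list nat) :
  (1 <= d)%nat -> (length x <= h)%nat -> (length v <= h)%nat ->
  0 <= tree_hit d h v x <= f_poly h (INR d) + g_poly h h (INR d).
Proof.
  intros Hd Lx Lv.
  assert (Hpow : forall k, 1 <= INR d ^ k) by (intros; apply pow_R1_Rle, (le_INR 1); lia).
  assert (Fmono : forall m n, (m <= n)%nat -> f_poly m (INR d) <= f_poly n (INR d)).
  { intros m n Hmn; rewrite !f_poly_fg_sum; now apply fg_sum_mono. }
  assert (Gmono : forall m n, (m <= n)%nat -> g_poly h m (INR d) <= g_poly h n (INR d)).
  { intros m n Hmn; rewrite !g_poly_fg_sum; now apply fg_sum_mono. }
  assert (Fnonneg : forall n, 0 <= f_poly n (INR d)).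
  { intros n; rewrite f_poly_fg_sum; now apply fg_sum_nonneg. }
  assert (Gnonneg : forall n, 0 <= g_poly h n (INR d)).
  { intros n; rewrite g_poly_fg_sum; now apply fg_sum_nonneg. }
  pose proof (lca_length_l x v); pose proof (lca_length_r x v).
  pose proof (Fmono (h - length x)%nat (h - length (lca x v))%nat ltac:(lia)).
  pose proof (Fmono (h - length (lca x v))%nat h ltac:(lia)).
  pose proof (Gmono (length (lca x v)) (length v) ltac:(lia)).
  pose proof (Gmono (length v) h Lv).
  pose proof (Fnonneg (h - length x)%nat); pose proof (Gnonneg (length (lca x v))).
  unfold tree_hit; lra.
Qed.

Lemma tree_hit_mean_value (d h : nat) (v x : list nat) :
  is_vertex d h v -> is_vertex d h x -> x <> v ->
  INR (deg d h x) * (tree_hit d h v x - 1) = sumR (map (tree_hit d h v) (nbrs d h x)).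
Proof.
  intros Vv [Lx _] Hxv; destruct (vdec (lca x v) x) as [Hx|Hx].
  - now apply tree_hit_on_path.
  - destruct x as [|a p] using rev_ind; [easy|].
    rewrite length_app in Lx; simpl in Lx.
    apply tree_hit_off_path; [lia|exact Hx].
Qed.

Theorem mainTheorem9 (d h : nat) (u v : list nat) :
  (1 <= d)%nat -> (1 <= h)%nat ->
  is_vertex d h u -> is_vertex d h v ->
  is_hitting_time d h u v
    (f_poly (h - length (lca u v)) (INR d) - f_poly (h - length u) (INR d)
     + g_poly h (length v) (INR d) - g_poly h (length (lca u v)) (INR d)).
Proof.
  intros Hd Hh Vu Vv.
  apply (is_series_ext (fun t => INR t * first_passage vdec (nbrs d h) v t u)).
  { intros t; now rewrite hit_prob_first_passage. }
  apply (is_series_first_passage _ vdec (nbrs d h) (is_vertex d h) (is_vertex_nbrs d h)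
           (fun x _ => nbrs_nonnil d h x Hd Hh) v (tree_hit d h v)
           (f_poly h (INR d) + g_poly h h (INR d))); [| |intros x [Lx _]| exact Vu].
  - apply tree_hit_target.
  - intros x Vx Hxv.
    rewrite (avg_eq _ _ _ (fun z _ => nbrs_nonnil d h z Hd Hh) _ (tree_hit d h v x - 1) x Vx);
      [ring|].
    symmetry; now apply tree_hit_mean_value.
  - apply tree_hit_bounds; [exact Hd|exact Lx|apply Vv].
Qed.
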